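(* Assume $\nabla f$ is $L$-Lipschitz, and consider the SAM flow at a point $(\mathcal G_1,\ldots,\mathcal G_K)$ where not all $g_k$ vanish. Then for all $i,j\in[K]$ with $i\ne j$, $$\frac{d}{dt}\big(\|\mathcal G_i\|_F^2-\|\mathcal G_j\|_F^2\big)=2\rho u\big(\|g_i\|_F^2-\|g_j\|_F^2\big)+R_{ij},$$ where there is a constant $C$ depending only on $\Phi$, $K$, $L$, the Frobenius norms of the current cores and $\|\nabla f(\mathcal T)\|_F$ (with $\mathcal T=\Phi(\mathcal G_1,\ldots,\mathcal G_K)$) such that $|R_{ij}|\le C\rho^2$ for all $\rho\in(0,1]$. (The paper writes the remainder as $O(\rho^2L)$.)
   Context: Let $K\ge 2$. For each $k\in[K]$ let $V_k$ be a finite-dimensional real space of tensors with Frobenius inner product $\langle\cdot,\cdot\rangle_F$ and norm $\|\cdot\|_F$; $[K]=\{1,\ldots,K\}$. Let $\Phi:V_1\times\cdots\times V_K\to\mathbb R^{n_1\times\cdots\times n_d}$ be multilinear, $f:\mathbb R^{n_1\times\cdots\times n_d}\to\mathbb R$ continuously differentiable with $\|\nabla f(\mathcal X)-\nabla f(\mathcal Y)\|_F\le L\|\mathcal X-\mathcal Y\|_F$ for all $\mathcal X,\mathcal Y$, and $F:=f\circ\Phi$. SAM gradient flow with radius $\rho>0$: at a point $(\mathcal G_1,\ldots,\mathcal G_K)$ let $g_k=\nabla_{\mathcal G_k}F(\mathcal G_1,\ldots,\mathcal G_K)$, $u=(\sum_{j=1}^K\|g_j\|_F^2)^{-1/2}$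 (requiring not all $g_j=0$), $\tilde{\mathcal G}_k=\mathcal G_k+\rho u g_k$, $\tilde g_k=\nabla_{\mathcal G_k}F(\tilde{\mathcal G}_1,\ldots,\tilde{\mathcal G}_K)$; the SAM flow is $\frac{d}{dt}\mathcal G_k=-\tilde g_k$ for all $k\in[K]$, and time derivatives above are along this flow at the given point. *)

From HB Require Import structures.
From mathcomp Require Import all_boot all_order all_algebra.
From mathcomp Require Import all_classical all_reals all_analysis.
Set Implicit Arguments. Unset Strict Implicit. Unset Printing Implicit Defensive.
Import Order.TTheory GRing.Theory Num.Theory.
Local Open Scope ring_scope.

Section Defs.
Variable R : realType.

(* Tensors are represented by their (flattened) coordinate row vectors;
   the Frobenius inner product is the Euclidean dot product of coordinates. *)
Definition frob_dot (n : nat) (x y : 'rV[R]_n) : R := \sum_(c < n) x 0 c * y 0 c.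
Definition frob2 (n : nat) (x : 'rV[R]_n) : R := frob_dot x x.
Definition frob (n : nat) (x : 'rV[R]_n) : R := Num.sqrt (frob2 x).

Variables (K : nat) (m : 'I_K -> nat).
Definition cores := forall k : 'I_K, 'rV[R]_(m k).

Definition multilinear (N : nat) (Phi : cores -> 'rV[R]_N) : Prop :=
  forall (G : cores) (k : 'I_K) (a : R) (x y : 'rV[R]_(m k)),
    Phi (@dfwith _ _ G k (a *: x + y)) = a *: Phi (@dfwith _ _ G k x) + Phi (@dfwith _ _ G k y).

Definition is_gradient (N : nat) (f : 'rV[R]_N -> R) (gf : 'rV[R]_N -> 'rV[R]_N) :=
  forall X H : 'rV[R]_N,
    is_derive (0 : R) (1 : R) (fun t : R => f (X + t *: H)) (frob_dot (gf X) H).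

Definition is_partial_gradient (F : cores -> R)
    (gF : forall k : 'I_K, cores -> 'rV[R]_(m k)) :=
  forall (G : cores) (k : 'I_K) (w : 'rV[R]_(m k)),
    is_derive (0 : R) (1 : R) (fun t : R => F (@dfwith _ _ G k (G k + t *: w)))
      (frob_dot (gF k G) w).

Definition sam_u (gF : forall k : 'I_K, cores -> 'rV[R]_(m k)) (G : cores) : R :=
  (Num.sqrt (\sum_(j < K) frob2 (gF j G)))^-1.

Definition sam_perturb (gF : forall k : 'I_K, cores -> 'rV[R]_(m k))
    (rho : R) (G : cores) : cores :=
  fun k => G k + (rho * sam_u gF G) *: gF k G.

Definition sam_field (gF : forall k : 'I_K, cores -> 'rV[R]_(m k))
    (rho : R) (G : cores) : cores :=
  fun k => - gF k (sam_perturb gF rho G).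

Definition follows_at (gamma : R -> cores) (t0 : R) (V : cores) (G : cores) : Prop :=
  gamma t0 = G /\
  forall (k : 'I_K) (c : 'I_(m k)),
    is_derive t0 (1 : R) (fun t : R => gamma t k 0 c) (V k 0 c).

End Defs.

From HB Require Import structures.
From mathcomp Require Import all_boot all_order all_algebra.
From mathcomp Require Import all_classical all_reals all_analysis.
From mathcomp Require Import ring lra.
Set Implicit Arguments. Unset Strict Implicit. Unset Printing Implicit Defensive.
Import Order.TTheory GRing.Theory Num.Theory.
Local Open Scope ring_scope.

(* Since Phi is multilinear, the chain rule gives <g_k, w> = <grad f(Phi G), Phi(G with
   slot k replaced by w)>. Writing G_k = tG_k - h_k with h_k = rho u g_k, the derivative
   -2 <G_k, tg_k> of ||G_k||^2 becomes -2 <grad f(Phi tG), Phi tG> (the same for every k,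
   hence cancelling in the difference) plus 2 <grad f(Phi tG), Phi(tG with h_k at k)>,
   which equals 2 rho u ||g_k||^2 = 2 <grad f(Phi G), Phi(G with h_k at k)> up to an error.
   Since ||h_k|| <= rho and ||Phi H|| <= M prod_k ||H_k||, the Lipschitz bound on grad f
   and a telescoping over the slots make that error O(rho^2). *)

Section Frobenius.
Variable R : realType.
Implicit Types (n : nat) (a : R).

Lemma frob_dotC n (x y : 'rV[R]_n) : frob_dot x y = frob_dot y x.
Proof. by apply: eq_bigr => c _; rewrite mulrC. Qed.

Lemma frob_dotDr n (x y z : 'rV[R]_n) :
  frob_dot x (y + z) = frob_dot x y + frob_dot x z.
Proof. by rewrite /frob_dot -big_split; apply: eq_bigr => c _; rewrite !mxE mulrDr. Qed.

Lemma frob_dotDl n (x y z : 'rV[R]_n) :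
  frob_dot (y + z) x = frob_dot y x + frob_dot z x.
Proof. by rewrite frob_dotC frob_dotDr !(frob_dotC x). Qed.

Lemma frob_dotZr n a (x y : 'rV[R]_n) : frob_dot x (a *: y) = a * frob_dot x y.
Proof. by rewrite /frob_dot mulr_sumr; apply: eq_bigr => c _; rewrite !mxE mulrCA. Qed.

Lemma frob_dotZl n a (x y : 'rV[R]_n) : frob_dot (a *: x) y = a * frob_dot x y.
Proof. by rewrite frob_dotC frob_dotZr frob_dotC. Qed.

Lemma frob_dotNr n (x y : 'rV[R]_n) : frob_dot x (- y) = - frob_dot x y.
Proof. by rewrite -scaleN1r frob_dotZr mulN1r. Qed.

Lemma frob_dotNl n (x y : 'rV[R]_n) : frob_dot (- x) y = - frob_dot x y.
Proof. by rewrite frob_dotC frob_dotNr frob_dotC. Qed.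

Lemma frob_dotBr n (x y z : 'rV[R]_n) :
  frob_dot x (y - z) = frob_dot x y - frob_dot x z.
Proof. by rewrite frob_dotDr frob_dotNr. Qed.

Lemma frob_dotBl n (x y z : 'rV[R]_n) :
  frob_dot (y - z) x = frob_dot y x - frob_dot z x.
Proof. by rewrite frob_dotDl frob_dotNl. Qed.

Lemma frob2_ge0 n (x : 'rV[R]_n) : 0 <= frob2 x.
Proof. by apply: sumr_ge0 => c _; rewrite -expr2 sqr_ge0. Qed.

Lemma frob_ge0 n (x : 'rV[R]_n) : 0 <= frob x.
Proof. exact: sqrtr_ge0. Qed.

Lemma frob_sqr n (x : 'rV[R]_n) : frob x ^+ 2 = frob2 x.
Proof. by rewrite sqr_sqrtr // frob2_ge0. Qed.

Lemma frob2_eq0 n (x : 'rV[R]_n) c : frob2 x = 0 -> x 0 c = 0.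
Proof.
rewrite /frob2 /frob_dot => /eqP; rewrite psumr_eq0 => [|i _]; last first.
  by rewrite -expr2 sqr_ge0.
by move=> /allP /(_ c (mem_index_enum _)); rewrite /= mulf_eq0 orbb => /eqP.
Qed.

Lemma frob_dot_sqr_le n (x y : 'rV[R]_n) : frob_dot x y ^+ 2 <= frob2 x * frob2 y.
Proof.
have [x0|xn0] := eqVneq (frob2 x) 0.
  rewrite x0 mul0r /frob_dot big1 ?expr0n // => c _.
  by rewrite frob2_eq0 ?mul0r.
have xpos : 0 < frob2 x by rewrite lt_def xn0 frob2_ge0.
(* expand 0 <= ||a y - d x||^2 with a = ||x||^2 and d = <x, y> *)
have := frob2_ge0 (frob2 x *: y - frob_dot x y *: x).
rewrite /frob2 !(frob_dotBl, frob_dotBr, frob_dotZl, frob_dotZr) (frob_dotC y x).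
rewrite -/(frob2 x) -/(frob2 y); set d := frob_dot x y => hge0.
have : 0 <= frob2 x * (frob2 x * frob2 y - d ^+ 2) by nra.
by rewrite pmulr_rge0 // subr_ge0.
Qed.

Lemma frob_dot_le n (x y : 'rV[R]_n) : `|frob_dot x y| <= frob x * frob y.
Proof.
rewrite -ler_sqr ?nnegrE ?mulr_ge0 ?frob_ge0 //.
by rewrite real_normK ?num_real // exprMn !frob_sqr frob_dot_sqr_le.
Qed.

Lemma frobD n (x y : 'rV[R]_n) : frob (x + y) <= frob x + frob y.
Proof.
rewrite -ler_sqr ?nnegrE ?addr_ge0 ?frob_ge0 // frob_sqr /frob2.
rewrite !(frob_dotDl, frob_dotDr) (frob_dotC y x) -/(frob2 x) -/(frob2 y) -!frob_sqr.
have := frob_dot_le x y; have := ler_norm (frob_dot x y); nra.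
Qed.

Lemma frob2Z n a (x : 'rV[R]_n) : frob2 (a *: x) = a ^+ 2 * frob2 x.
Proof. by rewrite /frob2 frob_dotZl frob_dotZr mulrA expr2. Qed.

Lemma frobZ n a (x : 'rV[R]_n) : frob (a *: x) = `|a| * frob x.
Proof. by rewrite /frob frob2Z sqrtrM ?sqr_ge0 // sqrtr_sqr. Qed.

Lemma frob0 n : frob (0 : 'rV[R]_n) = 0.
Proof. by rewrite -(scale0r 0) frobZ normr0 mul0r. Qed.

Lemma normr_coord_le_frob n (x : 'rV[R]_n) c : `|x 0 c| <= frob x.
Proof.
rewrite -ler_sqr ?nnegrE ?frob_ge0 // real_normK ?num_real // frob_sqr.
rewrite /frob2 /frob_dot (bigD1 c) //= -expr2 lerDl.
by apply: sumr_ge0 => i _; rewrite -expr2 sqr_ge0.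
Qed.

Lemma frob_sum (I : Type) (r : seq I) (P : pred I) n (F : I -> 'rV[R]_n) :
  frob (\sum_(i <- r | P i) F i) <= \sum_(i <- r | P i) frob (F i).
Proof.
elim/big_rec2: _ => [|i y1 y2 _ IH]; first by rewrite frob0.
by apply: le_trans (frobD _ _) _; rewrite lerD2l.
Qed.

Lemma is_derive_frob2 n (x : R -> 'rV[R]_n) (dx : 'rV[R]_n) t0 :
  (forall c, is_derive t0 (1 : R) (fun t => x t 0 c) (dx 0 c)) ->
  is_derive t0 (1 : R) (fun t => frob2 (x t)) (2 * frob_dot (x t0) dx).
Proof.
move=> hdx.
have -> : (fun t => frob2 (x t)) = \sum_(c < n) ((fun t => x t 0 c) * (fun t => x t 0 c)).
  by rewrite fct_sumE; apply/funext => t.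
apply: is_derive_eq; rewrite /frob_dot mulr_sumr; apply: eq_bigr => c _ /=.
by rewrite /GRing.scale /=; ring.
Qed.

End Frobenius.

Lemma prodr_if_scale (R : comPzRingType) (K : nat) (k : 'I_K) (r : R) (b : 'I_K -> R) :
  \prod_(p < K) (if p == k then r * b p else b p) = r * \prod_(p < K) b p.
Proof.
rewrite (bigD1 k) //= eqxx [in RHS](bigD1 k) //= mulrA.
by congr (_ * _); apply: eq_bigr => p /negbTE ->.
Qed.

Section Cores.
Variables (R : realType) (K : nat) (m : 'I_K -> nat).

Lemma cores_ext (G H : cores R m) : (forall k, G k = H k) -> G = H.
Proof. exact: functional_extensionality_dep. Qed.

Lemma dfwith_id (G : cores R m) k : dfwith G k (G k) = G.
Proof. by apply: cores_ext => l; case: dfwithP. Qed.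

Definition splice (X Y : cores R m) (n : nat) : cores R m :=
  fun l => if (l < n)%N then Y l else X l.

End Cores.

Section Multilinear.
Variables (R : realType) (K : nat) (m : 'I_K -> nat) (N : nat).
Variable Phi : cores R m -> 'rV[R]_N.
Hypothesis hPhi : multilinear Phi.

Lemma mlinD (G : cores R m) k (x y : 'rV_(m k)) :
  Phi (dfwith G k (x + y)) = Phi (dfwith G k x) + Phi (dfwith G k y).
Proof. by rewrite -{1}(scale1r x) hPhi scale1r. Qed.

Lemma mlin0 (G : cores R m) k : Phi (dfwith G k (0 : 'rV_(m k))) = 0.
Proof. by have := @hPhi G k (-1) 0 0; rewrite scaleN1r oppr0 addr0 scaleN1r addNr. Qed.

Lemma mlinZ (G : cores R m) k a (x : 'rV_(m k)) :
  Phi (dfwith G k (a *: x)) = a *: Phi (dfwith G k x).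
Proof. by rewrite -(addr0 (a *: x)) hPhi mlin0 addr0. Qed.

Lemma mlin_sum (G : cores R m) k (I : Type) (r : seq I) (P : pred I)
    (F : I -> 'rV_(m k)) :
  Phi (dfwith G k (\sum_(i <- r | P i) F i)) = \sum_(i <- r | P i) Phi (dfwith G k (F i)).
Proof. by elim/big_rec2: _ => [|i y1 y2 _ <-]; rewrite ?mlin0 ?mlinD. Qed.

Lemma mlin_telescope (X Y : cores R m) :
  Phi Y - Phi X = \sum_(k < K) Phi (dfwith (splice X Y k) k (Y k - X k)).
Proof.
have -> : Phi Y - Phi X = Phi (splice X Y K) - Phi (splice X Y 0).
  by congr (Phi _ - Phi _); apply: cores_ext => l; rewrite /splice ?ltn_ord.
rewrite -(telescope_sumr (fun n => Phi (splice X Y n)) (leq0n K)) big_mkord.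
apply: eq_bigr => k _.
have splice_next : splice X Y k.+1 = dfwith (splice X Y k) k (Y k - X k + X k).
  apply: cores_ext => l; rewrite subrK; case: dfwithP => [|j hj].
    by rewrite /splice ltnSn.
  by rewrite /splice ltnS leq_eqVlt; case: eqP => // /val_inj e; rewrite e eqxx in hj.
have splice_at : splice X Y k = dfwith (splice X Y k) k (X k).
  by apply: cores_ext => l; case: dfwithP => //; rewrite /splice ltnn.
by rewrite splice_next mlinD -splice_at addrK.
Qed.

Lemma mlin_slot_le (H : cores R m) k (b : R) :
  (forall c, frob (Phi (dfwith H k ('e_c : 'rV_(m k)))) <= b) ->
  frob (Phi H) <= (m k)%:R * (frob (H k) * b).
Proof.
move=> hb.
have -> : Phi H = Phi (dfwith H k (\sum_(c < m k) H k 0 c *: ('e_c : 'rV_(m k)))).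
  by rewrite -row_sum_delta dfwith_id.
rewrite mlin_sum; apply: le_trans (frob_sum _ _ _) _.
apply: le_trans (_ : _ <= \sum_(c < m k) frob (H k) * b) _.
  apply: ler_sum => c _; rewrite mlinZ frobZ.
  by apply: ler_pM; rewrite ?normr_ge0 ?frob_ge0 ?normr_coord_le_frob.
by rewrite sumr_const card_ord mulr_natl.
Qed.

Lemma mlin_bound_prefix n : exists M : R, 0 <= M /\ forall H : cores R m,
  (forall k : 'I_K, (n <= k)%N -> exists c, H k = 'e_c) ->
  frob (Phi H) <= M * \prod_(k < K | (k < n)%N) frob (H k).
Proof.
elim: n => [|n [M [M0 IH]]].
  exists (\sum_(c : {dffun forall k : 'I_K, 'I_(m k)}) frob (Phi (fun k => 'e_(c k)))).
  split=> [|H hH]; first by apply: sumr_ge0 => c _; exact: frob_ge0.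
  have [c hc] := fin_all_exists (fun k => hH k (leq0n k)).
  pose cf : {dffun forall k : 'I_K, 'I_(m k)} := finfun c.
  rewrite [X in _ * X]big_pred0 // mulr1 (bigD1 cf) //=.
  have -> : H = (fun k => 'e_(cf k)) by apply: cores_ext => k; rewrite ffunE hc.
  by rewrite lerDl sumr_ge0 // => d _; exact: frob_ge0.
have [Kn|nK] := leqP K n.
  exists M; split=> // H hH; rewrite (eq_bigl (fun k : 'I_K => (k < n)%N)) => [|k].
    by apply: IH => k; rewrite leqNgt (leq_trans (ltn_ord k) Kn).
  by rewrite (leq_trans (ltn_ord k) Kn) (leq_trans (ltn_ord k) (leqW Kn)).
pose k0 : 'I_K := Ordinal nK.
exists ((m k0)%:R * M); split=> [|H hH]; first by rewrite mulr_ge0.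
have prod_split : \prod_(k < K | (k < n.+1)%N) frob (H k)
    = frob (H k0) * \prod_(k < K | (k < n)%N) frob (H k).
  rewrite (bigD1 k0) //=; congr (_ * _); apply: eq_bigl => k.
  by rewrite ltnS leq_eqVlt -(inj_eq val_inj) /=; case: ltngtP.
rewrite prod_split mulrACA -mulrA; apply: mlin_slot_le => c.
have -> : \prod_(k < K | (k < n)%N) frob (H k)
    = \prod_(k < K | (k < n)%N) frob (dfwith H k0 ('e_c : 'rV_(m k0)) k).
  apply: eq_bigr => k hk; rewrite dfwithout //.
  by apply: contraTneq hk => <-; rewrite ltnn.
apply: IH => k hk; case: (eqVneq k0 k) => [<-|k0k]; first by rewrite dfwithin; exists c.
rewrite dfwithout //; apply: hH; rewrite ltn_neqAle hk andbT.
by apply: contra_neq k0k => e; apply: val_inj.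
Qed.

Lemma mlin_bound : exists M : R, 0 <= M /\ forall H : cores R m,
  frob (Phi H) <= M * \prod_(k < K) frob (H k).
Proof.
have [M [M0 hM]] := mlin_bound_prefix K; exists M; split=> // H.
rewrite (eq_bigl (fun k : 'I_K => (k < K)%N)) => [|k]; last by rewrite ltn_ord.
by apply: hM => k; rewrite leqNgt ltn_ord.
Qed.

Section Bounded.
Variable M : R.
Hypothesis M_ge0 : 0 <= M.
Hypothesis hM : forall H : cores R m, frob (Phi H) <= M * \prod_(k < K) frob (H k).

Lemma mlin_bound_le (H : cores R m) (b : 'I_K -> R) :
  (forall p, frob (H p) <= b p) -> frob (Phi H) <= M * \prod_(p < K) b p.
Proof.
move=> hb; apply: le_trans (hM H) _; apply: ler_wpM2l => //.
by apply: ler_prod => p _; rewrite frob_ge0 hb.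
Qed.

Lemma mlin_sub_le (X Y : cores R m) (b : 'I_K -> R) (r : R) :
  (forall p, frob (X p) <= b p) -> (forall p, frob (Y p) <= b p) ->
  (forall p, frob (Y p - X p) <= r * b p) ->
  frob (Phi Y - Phi X) <= K%:R * (M * (r * \prod_(p < K) b p)).
Proof.
move=> hX hY hYX; rewrite mlin_telescope; apply: le_trans (frob_sum _ _ _) _.
apply: le_trans (_ : _ <= \sum_(k < K) M * (r * \prod_(p < K) b p)) _; last first.
  by rewrite sumr_const card_ord mulr_natl.
apply: ler_sum => k _.
rewrite -(prodr_if_scale k); apply: mlin_bound_le => p.
case: dfwithP => [|l kl]; first by rewrite eqxx.
by rewrite eq_sym (negbTE kl) /splice; case: ifP.
Qed.

End Bounded.
End Multilinear.

Section PartialGradient.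
Variables (R : realType) (K : nat) (m : 'I_K -> nat) (N : nat).
Variable Phi : cores R m -> 'rV[R]_N.
Hypothesis hPhi : multilinear Phi.
Variables (f : 'rV[R]_N -> R) (gf : 'rV[R]_N -> 'rV[R]_N).
Variable gF : forall k : 'I_K, cores R m -> 'rV[R]_(m k).
Hypothesis hgrad : is_gradient f gf.
Hypothesis hpg : is_partial_gradient (fun H : cores R m => f (Phi H)) gF.

Lemma partial_gradientE (H : cores R m) k (w : 'rV[R]_(m k)) :
  frob_dot (gF k H) w = frob_dot (gf (Phi H)) (Phi (dfwith H k w)).
Proof.
have hF := @hpg H k w; have hf := hgrad (Phi H) (Phi (dfwith H k w)).
have slot_line : (fun t : R => f (Phi (dfwith H k (H k + t *: w))))
    = (fun t : R => f (Phi H + t *: Phi (dfwith H k w))).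
  by apply/funext => t; rewrite addrC hPhi dfwith_id addrC.
rewrite slot_line in hF.
by rewrite -(@derive_val _ _ _ _ _ _ _ hF) -(@derive_val _ _ _ _ _ _ _ hf).
Qed.

End PartialGradient.

Section SAMStep.
Variables (R : realType) (K : nat) (m : 'I_K -> nat) (N : nat).
Variable Phi : cores R m -> 'rV[R]_N.
Hypothesis hPhi : multilinear Phi.
Variable M : R.
Hypothesis M_ge0 : 0 <= M.
Hypothesis hM : forall H : cores R m, frob (Phi H) <= M * \prod_(k < K) frob (H k).
Variables (f : 'rV[R]_N -> R) (gf : 'rV[R]_N -> 'rV[R]_N) (L : R).
Variables (gF : forall k : 'I_K, cores R m -> 'rV[R]_(m k)) (G : cores R m).
Hypothesis hgrad : is_gradient f gf.
Hypothesis hLip : forall X Y : 'rV[R]_N, frob (gf X - gf Y) <= L * frob (X - Y).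
Hypothesis hpg : is_partial_gradient (fun H : cores R m => f (Phi H)) gF.
Variable rho : R.
Hypothesis rho_ge0 : 0 <= rho.
Hypothesis rho_le1 : rho <= 1.

Let h k : 'rV[R]_(m k) := (rho * sam_u gF G) *: gF k G.
Let tG := sam_perturb gF rho G.
Let beta p := frob (G p) + 1.
Let B := \prod_(p < K) beta p.

Lemma frob_shift_le k : frob (h k) <= rho.
Proof.
rewrite -ler_sqr ?nnegrE ?frob_ge0 // frob_sqr frob2Z exprMn -mulrA.
set S := \sum_(j < K) frob2 (gF j G).
have gS : frob2 (gF k G) <= S.
  by rewrite /S (bigD1 k) //= lerDl sumr_ge0 // => j _; exact: frob2_ge0.
(* u^2 S = 1, or u = 0 when S = 0 since 0^-1 = 0 *)
have uS : sam_u gF G ^+ 2 * S <= 1.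
  rewrite /sam_u -/S exprVn sqr_sqrtr ?sumr_ge0 // => [|j _]; last exact: frob2_ge0.
  by have [->|Sn0] := eqVneq S 0; rewrite ?mulr0 ?mulVf.
have ug : sam_u gF G ^+ 2 * frob2 (gF k G) <= 1.
  by apply: le_trans uS; rewrite ler_wpM2l ?sqr_ge0.
by rewrite ler_piMr ?sqr_ge0.
Qed.

Lemma frob_core_le p : frob (G p) <= beta p.
Proof. by rewrite lerDl. Qed.

Lemma frob_perturb_le p : frob (tG p) <= beta p.
Proof. by apply: le_trans (frobD _ _) _; rewrite lerD2l (le_trans (frob_shift_le p)). Qed.

Lemma frob_shift_le_beta p : frob (h p) <= rho * beta p.
Proof. by apply: le_trans (frob_shift_le p) _; rewrite ler_peMr // lerDr frob_ge0. Qed.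

Lemma perturb_sub p : tG p - G p = h p.
Proof. by rewrite addrC addKr. Qed.

Lemma frob_Phi_perturb_sub_le : frob (Phi tG - Phi G) <= K%:R * (M * (rho * B)).
Proof.
apply: mlin_sub_le => // p; rewrite ?perturb_sub.
- exact: frob_core_le.
- exact: frob_perturb_le.
- exact: frob_shift_le_beta.
Qed.

Let beta_at k p := if p == k then rho * beta p else beta p.

Lemma frob_slot_le (H : cores R m) k p :
  (forall q, frob (H q) <= beta q) -> frob (dfwith H k (h k) p) <= beta_at k p.
Proof.
rewrite /beta_at; case: dfwithP => [|q kq] hH; first by rewrite eqxx frob_shift_le_beta.
by rewrite eq_sym (negbTE kq).
Qed.

Lemma frob_Phi_shift_le k : frob (Phi (dfwith tG k (h k))) <= M * (rho * B).
Proof.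
rewrite -(prodr_if_scale k); apply: mlin_bound_le => // p.
exact/frob_slot_le/frob_perturb_le.
Qed.

Lemma frob_Phi_shift_sub_le k :
  frob (Phi (dfwith tG k (h k)) - Phi (dfwith G k (h k))) <= K%:R * (M * (rho * (rho * B))).
Proof.
rewrite -(prodr_if_scale k); apply: mlin_sub_le => // p.
- exact/frob_slot_le/frob_core_le.
- exact/frob_slot_le/frob_perturb_le.
case: (eqVneq k p) => [<-|kp]; rewrite /beta_at.
  by rewrite !dfwithin subrr frob0 ?eqxx !mulr_ge0 ?addr_ge0 ?frob_ge0.
by rewrite !dfwithout // perturb_sub frob_shift_le_beta.
Qed.

(* half the remainder R_ij of the paper is sam_remainder i - sam_remainder j *)
Definition sam_remainder k :=
  frob_dot (gf (Phi tG)) (Phi (dfwith tG k (h k)))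
  - frob_dot (gf (Phi G)) (Phi (dfwith G k (h k))).

Lemma frob_dot_sam_field k :
  frob_dot (G k) (sam_field gF rho G k)
  = rho * sam_u gF G * frob2 (gF k G) + sam_remainder k
    - frob_dot (gf (Phi tG)) (Phi tG).
Proof.
have -> : G k = tG k - h k by rewrite addrK.
rewrite /sam_field frob_dotNr frob_dotC frob_dotBr.
rewrite /sam_remainder -!(partial_gradientE hPhi hgrad hpg).
rewrite (partial_gradientE hPhi hgrad hpg tG (tG k)) dfwith_id.
by rewrite /h !frob_dotZr -/tG /frob2; ring.
Qed.

Lemma sam_remainder_le k : `|sam_remainder k| <=
  rho ^+ 2 * (`|L| * K%:R * M ^+ 2 * B ^+ 2 + frob (gf (Phi G)) * K%:R * M * B).
Proof.
set Y := Phi (dfwith tG k (h k)); set X := Phi (dfwith G k (h k)).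
have -> : sam_remainder k
    = frob_dot (gf (Phi tG) - gf (Phi G)) Y + frob_dot (gf (Phi G)) (Y - X).
  by rewrite /sam_remainder frob_dotBl frob_dotBr addrA subrK.
have gf_sub : frob (gf (Phi tG) - gf (Phi G)) <= `|L| * (K%:R * (M * (rho * B))).
  apply: le_trans (hLip _ _) _; apply: le_trans (_ : `|L| * frob (Phi tG - Phi G) <= _).
    by rewrite ler_wpM2r ?frob_ge0 ?ler_norm.
  by rewrite ler_wpM2l ?frob_Phi_perturb_sub_le.
have lip_term : `|frob_dot (gf (Phi tG) - gf (Phi G)) Y|
    <= `|L| * (K%:R * (M * (rho * B))) * (M * (rho * B)).
  by apply: le_trans (frob_dot_le _ _) _; rewrite ler_pM ?frob_ge0 ?frob_Phi_shift_le.
have shift_term : `|frob_dot (gf (Phi G)) (Y - X)|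
    <= frob (gf (Phi G)) * (K%:R * (M * (rho * (rho * B)))).
  apply: le_trans (frob_dot_le _ _) _.
  by rewrite ler_wpM2l ?frob_ge0 ?frob_Phi_shift_sub_le.
apply: le_trans (ler_normD _ _) _; apply: le_trans (lerD lip_term shift_term) _.
by rewrite le_eqVlt; apply/orP; left; apply/eqP; ring.
Qed.

End SAMStep.

Theorem theorem2 (R : realType) (K : nat) (m : 'I_K -> nat) (N : nat)
    (Phi : cores R m -> 'rV[R]_N) :
  (2 <= K)%N ->
  multilinear Phi ->
  exists Cst : R -> ('I_K -> R) -> R -> R,
  forall (f : 'rV[R]_N -> R) (gf : 'rV[R]_N -> 'rV[R]_N) (L : R)
         (gF : forall k : 'I_K, cores R m -> 'rV[R]_(m k)) (G : cores R m),
    is_gradient f gf ->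
    (forall X Y : 'rV[R]_N, frob (gf X - gf Y) <= L * frob (X - Y)) ->
    is_partial_gradient (fun H : cores R m => f (Phi H)) gF ->
    (exists k : 'I_K, gF k G != 0) ->
    forall (i j : 'I_K), i != j ->
    forall rho : R, 0 < rho -> rho <= 1 ->
    forall (gamma : R -> cores R m) (t0 : R),
      follows_at gamma t0 (sam_field gF rho G) G ->
      exists Rij : R,
        is_derive t0 (1 : R)
          (fun t : R => frob2 (gamma t i) - frob2 (gamma t j))
          (2 * rho * sam_u gF G * (frob2 (gF i G) - frob2 (gF j G)) + Rij)
        /\ `|Rij| <= Cst L (fun k => frob (G k)) (frob (gf (Phi G))) * rho ^+ 2.
Proof.
move=> _ hPhi; have [M [M_ge0 hM]] := mlin_bound hPhi.
exists (fun L nG a => 4 * (`|L| * K%:R * M ^+ 2 * (\prod_(k < K) (nG k + 1)) ^+ 2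
                         + a * K%:R * M * \prod_(k < K) (nG k + 1))).
move=> f gf L gF G hgrad hLip hpg _ i j _ rho rho_gt0 rho_le1 gamma t0 [gamma_t0 hder].
have rho_ge0 := ltW rho_gt0.
pose Rk := sam_remainder Phi gf gF G rho.
exists (2 * (Rk i - Rk j)); split.
  have -> : (fun t => frob2 (gamma t i) - frob2 (gamma t j))
      = (fun t => frob2 (gamma t i)) - (fun t => frob2 (gamma t j)) by [].
  have hB := is_deriveB (is_derive_frob2 (hder i)) (is_derive_frob2 (hder j)).
  apply: (is_derive_eq hB); rewrite gamma_t0.
  by rewrite !(frob_dot_sam_field hPhi G hgrad hpg) /Rk; ring.
have := sam_remainder_le hPhi M_ge0 hM gF G hLip rho_ge0 rho_le1 i.
have := sam_remainder_le hPhi M_ge0 hM gF G hLip rho_ge0 rho_le1 j.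
rewrite -/(Rk i) -/(Rk j) normrM ger0_norm //.
have := ler_normB (Rk i) (Rk j); nra.
Qed.
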